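(* For all positive integers $t$ and $p$ there exists an antipodal $3^t5^p$-splitting of $Q_2^{2^{2t+3p}}$.
   Context: $Q_2^n=\{0,1\}^n$. For $0\le m\le n$, an $m$-face of $Q_2^n$ is given by a tuple $a=(a_1,\dots,a_n)\in\{0,1,*\}^n$ with exactly $m$ entries equal to $*$; it denotes the set $\{x\in Q_2^n : x_i=a_i \text{ whenever } a_i\in\{0,1\}\}$. The direction of a face is the set of positions of its asterisks; two faces are parallel if they have the same direction, and two parallel faces $a,b$ are antipodal if $b_i=1-a_i$ at every non-asterisk position $i$. For positive integers $k<n$, an antipodal $k$-splitting of $Q_2^n$ is a collection of exactly $2^k$ $(n-k)$-faces whose union is $Q_2^n$ and which contains no pair of parallel non-antipodal faces. *)

From mathcomp Require Import all_boot.
Set Implicit Arguments. Unset Strict Implicit. Unset Printing Implicit Defensive.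

(* A vertex of Q_2^n is a function 'I_n -> bool.
   A face is a word in {0,1,*}^n, encoded as 'I_n -> option bool
   with None standing for the asterisk *, Some b for the digit b. *)
Definition vertex (n : nat) := {ffun 'I_n -> bool}.
Definition face (n : nat) := {ffun 'I_n -> option bool}.

Definition direction n (a : face n) : {set 'I_n} := [set i | a i == None].

Definition is_mface n (m : nat) (a : face n) : bool := #|direction a| == m.

Definition face_set n (a : face n) : {set vertex n} :=
  [set x : vertex n | [forall i, if a i is Some b then x i == b else true]].

Definition parallel n (a b : face n) : bool := direction a == direction b.

Definition antipodal n (a b : face n) : bool :=
  parallel a b &&
  [forall i, if a i is Some x then b i == Some (~~ x) else true].

Definition antipodal_splitting (n k : nat) (S : {set face n}) : Prop :=
  [/\ 0 < k < n,
      #|S| = 2 ^ k,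
      (forall a, a \in S -> is_mface (n - k) a),
      (\bigcup_(a in S) face_set a) = [set: vertex n] &
      (forall a b, a \in S -> b \in S -> a != b -> parallel a b -> antipodal a b)].
Arguments antipodal_splitting : clear implicits.

(* Antipodal splittings multiply: from antipodal splittings of Q_2^n1 into
   2^k1 faces and of Q_2^n2 into 2^k2 faces we get one of Q_2^(n1 n2) into
   2^(k1 k2) faces.  Read a vertex of Q_2^(n1 n2) as n1 rows in Q_2^n2.  Each row
   lies in a unique face of the second splitting, and the bit of that face (its
   value at its first fixed coordinate) flips between antipodal faces.  These n1
   bits form a vertex of Q_2^n1, lying in a unique face a of the first splitting.
   The face of the product splitting through the vertex keeps the faces of the
   rows at the fixed positions of a and is free on the rows where a is free.
   These faces tile the cube, have dimension (n1-k1) n2 + k1 (n2-k2), and two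
   distinct parallel ones are antipodal because a bit decides which of two
   parallel faces of a splitting a row lies in.  Powers of an antipodal
   3-splitting of Q_2^4 and of a 5-splitting of Q_2^8, both checked by
   computation, then give the theorem. *)

From Stdlib Require Import Ascii String.
From HB Require Import structures.
From mathcomp Require Import all_boot zify.
Set Implicit Arguments. Unset Strict Implicit. Unset Printing Implicit Defensive.

Lemma gt0_sum_eq_card (T : finType) (f : T -> nat) :
  (forall x, 0 < f x) -> \sum_x f x = #|T| -> forall x, f x = 1.
Proof.
move=> f_gt0 sum_f x; have [_] := leqif_sum (fun i (_ : true) => leqif_eq (f_gt0 i)).
by rewrite sum1_card sum_f eqxx => /esym/forallP/(_ x)/eqP.
Qed.

Lemma le1_sum_eq_card (T : finType) (f : T -> nat) :
  (forall x, f x <= 1) -> \sum_x f x = #|T| -> forall x, f x = 1.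
Proof.
move=> f_le1 sum_f x; have [_] := leqif_sum (fun i (_ : true) => leqif_eq (f_le1 i)).
by rewrite sum1_card sum_f eqxx => /esym/forallP/(_ x)/eqP.
Qed.

Section Faces.
Variable n : nat.
Implicit Types (a b : face n) (x : vertex n) (S : {set face n}).

Lemma face_setP a x :
  reflect (forall i v, a i = Some v -> x i = v) (x \in face_set a).
Proof.
rewrite inE; apply: (iffP forallP) => [H i v ai | H i].
  by move: (H i); rewrite ai => /eqP.
by case ai: (a i) => [v|] //; rewrite (H i v ai).
Qed.

Lemma parallelP a b :
  reflect (forall i, (a i == None) = (b i == None)) (parallel a b).
Proof.
apply: (iffP eqP) => [/setP E i | E]; first by move: (E i); rewrite !inE.
by apply/setP => i; rewrite !inE E.
Qed.

Lemma antipodalP a b :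
  reflect (parallel a b /\ forall i v, a i = Some v -> b i = Some (~~ v))
          (antipodal a b).
Proof.
apply: (iffP andP) => -[ab H]; split=> //.
  by move=> i v ai; move/forallP/(_ i): H; rewrite ai => /eqP.
by apply/forallP => i; case ai: (a i) => [v|] //; rewrite (H i v ai).
Qed.

Lemma card_face_set a : #|face_set a| = 2 ^ #|direction a|.
Proof.
pose F i := if a i is Some v then pred1 v else predT.
have -> : #|face_set a| = #|(family F : simpl_pred _)|.
  apply: eq_card => x; rewrite inE; apply/forallP/familyP => H i;
    by move: (H i); rewrite /F; case: (a i).
rewrite card_family foldrE big_map big_enum /=.
rewrite (eq_bigr (fun i => if a i == None then 2 else 1)); last first.
  by move=> i _; rewrite /F; case: (a i) => [v|]; rewrite ?card1 ?card_bool.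
by rewrite -big_mkcond prod_nat_const /direction cardsE.
Qed.

Lemma card_vertex : #|{: vertex n}| = 2 ^ n.
Proof. by rewrite card_ffun card_bool card_ord. Qed.

Definition face_bit a : bool :=
  if [pick i | a i != None] is Some i then a i == Some true else false.

Lemma face_bit_antipodal a b :
  direction a != setT -> antipodal a b -> face_bit b = ~~ face_bit a.
Proof.
move=> a_proper /antipodalP[/parallelP ab a'b].
rewrite /face_bit (eq_pick (Q := fun i => a i != None)) => [|i]; last by rewrite ab.
case: pickP => [i | a_free]; last first.
  by case/eqP: a_proper; apply/setP => i; move: (a_free i); rewrite !inE => /negbFE.
by case ai: (a i) => [v|] // _; rewrite (a'b i v ai); case: v {ai}.
Qed.

Definition multiplicity S x := #|[set a in S | x \in face_set a]|.
Definition tiling S := forall x, multiplicity S x = 1.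

Lemma sum_multiplicity S :
  \sum_x multiplicity S x = \sum_(a in S) 2 ^ #|direction a|.
Proof.
transitivity (\sum_x \sum_(a in S) (x \in face_set a : nat)).
  apply: eq_bigr => x _.
  rewrite /multiplicity -sum1dep_card big_mkcond [RHS]big_mkcond /=.
  by apply: eq_bigr => a _; rewrite inE; case: (a \in S); case: (x \in face_set a).
rewrite exchange_big /=; apply: eq_bigr => a _.
rewrite -card_face_set -sum1_card [RHS]big_mkcond /=.
by apply: eq_bigr => x _; case: (x \in face_set a).
Qed.

Lemma sum_multiplicity_mface S d : {in S, forall a, is_mface d a} ->
  \sum_x multiplicity S x = #|S| * 2 ^ d.
Proof.
by move=> S_d; rewrite sum_multiplicity -sum_nat_const; apply: eq_bigr => a /S_d/eqP->.
Qed.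

Lemma tiling_cover S x : tiling S -> exists2 a, a \in S & x \in face_set a.
Proof.
move/(_ x)/eqP; rewrite eqn_leq => /andP[_ /card_gt0P[a /setIdP[aS xa]]].
by exists a.
Qed.

Lemma tiling_uniq S x a b : tiling S -> a \in S -> b \in S ->
  x \in face_set a -> x \in face_set b -> a = b.
Proof.
move/(_ x)/eqP; rewrite eqn_leq => /andP[/card_le1_eqP S_x _] aS bS xa xb.
by apply: S_x; rewrite inE ?aS ?bS.
Qed.

Lemma cover_tiling S :
  \bigcup_(a in S) face_set a = setT -> \sum_x multiplicity S x = 2 ^ n -> tiling S.
Proof.
move=> S_cover; rewrite -card_vertex; apply: gt0_sum_eq_card => x.
have /bigcupP[a aS xa] : x \in \bigcup_(a in S) face_set a by rewrite S_cover inE.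
by apply/card_gt0P; exists a; rewrite inE aS.
Qed.

Lemma disjoint_tiling S :
  {in S &, forall a b x, x \in face_set a -> x \in face_set b -> a = b} ->
  \sum_x multiplicity S x = 2 ^ n -> tiling S.
Proof.
move=> S_disj; rewrite -card_vertex; apply: le1_sum_eq_card => x.
apply/card_le1_eqP => a b /setIdP[aS xa] /setIdP[bS xb].
exact/esym/(S_disj a b aS bS x).
Qed.

Lemma tiling_bigcup S : tiling S -> \bigcup_(a in S) face_set a = setT.
Proof.
move=> S_tiling; apply/setP => x; rewrite inE.
by have [a aS xa] := tiling_cover x S_tiling; apply/bigcupP; exists a.
Qed.

Lemma card_tiling S k : k <= n -> {in S, forall a, is_mface (n - k) a} ->
  tiling S -> #|S| = 2 ^ k.
Proof.
move=> le_kn S_mface S_tiling; apply/eqP.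
rewrite -(eqn_pmul2r (expn_gt0 2 (n - k))) -expnD subnKC // -card_vertex.
by rewrite -sum_multiplicity_mface // -sum1_card; apply/eqP/eq_bigr => x _.
Qed.

Definition face_of S x : face n :=
  odflt [ffun=> None] [pick a in S | x \in face_set a].

Lemma face_ofP S x : tiling S -> face_of S x \in S /\ x \in face_set (face_of S x).
Proof.
move=> S_tiling; rewrite /face_of; case: pickP => [a /andP[] // | none].
by have [a aS xa] := tiling_cover x S_tiling; move: (none a); rewrite aS xa.
Qed.

Lemma face_of_eq S x a : tiling S -> a \in S -> x \in face_set a -> face_of S x = a.
Proof.
move=> S_tiling aS xa; have [fS xf] := face_ofP x S_tiling.
exact: tiling_uniq S_tiling fS aS xf xa.
Qed.

End Faces.

Section Splittings.
Variables (n k : nat) (S : {set face n}).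
Hypothesis S_split : antipodal_splitting n k S.

Lemma splitting_tiling : tiling S.
Proof.
case: S_split => /andP[k_gt0 lt_kn] S_card S_mface S_cover _.
apply: (cover_tiling S_cover).
by rewrite (sum_multiplicity_mface S_mface) S_card -expnD subnKC // ltnW.
Qed.

Lemma splitting_proper a : a \in S -> direction a != setT.
Proof.
case: S_split => /andP[k_gt0 lt_kn] _ S_mface _ _ /S_mface/eqP dir_a.
by apply/eqP => dir_full; move: dir_a; rewrite dir_full cardsT card_ord; lia.
Qed.

Lemma splitting_parallel_bit a b : a \in S -> b \in S -> parallel a b ->
  (a == b) = (face_bit a == face_bit b).
Proof.
case: S_split => _ _ _ _ S_anti aS bS ab.
have [-> | neq_ab] := eqVneq a b; first by rewrite !eqxx.
have anti_ab := S_anti a b aS bS neq_ab ab.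
by rewrite (face_bit_antipodal (splitting_proper aS) anti_ab); case: face_bit.
Qed.

End Splittings.

Section ProductFace.
Variables n1 n2 : nat.
Implicit Types (a : face n1) (F : 'I_n1 -> face n2).

Lemma card_ord_pair : #|{: 'I_n1 * 'I_n2}| = n1 * n2.
Proof. by rewrite card_prod !card_ord. Qed.

Definition ord_of_pair (ij : 'I_n1 * 'I_n2) : 'I_(n1 * n2) :=
  cast_ord card_ord_pair (enum_rank ij).
Definition pair_of_ord (k : 'I_(n1 * n2)) : 'I_n1 * 'I_n2 :=
  enum_val (cast_ord (esym card_ord_pair) k).

Lemma ord_of_pairK : cancel ord_of_pair pair_of_ord.
Proof. by move=> ij; rewrite /pair_of_ord cast_ordK enum_rankK. Qed.

Lemma pair_of_ordK : cancel pair_of_ord ord_of_pair.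
Proof. by move=> k; rewrite /ord_of_pair enum_valK cast_ordKV. Qed.

Lemma ord_pairP (k : 'I_(n1 * n2)) : exists ij, k = ord_of_pair ij.
Proof. by exists (pair_of_ord k); rewrite pair_of_ordK. Qed.

Definition row (x : vertex (n1 * n2)) i : vertex n2 :=
  [ffun j => x (ord_of_pair (i, j))].

Definition prod_face a F : face (n1 * n2) :=
  [ffun k => let: (i, j) := pair_of_ord k in if a i is Some _ then F i j else None].

Lemma prod_faceE a F i j :
  prod_face a F (ord_of_pair (i, j)) = if a i is Some _ then F i j else None.
Proof. by rewrite ffunE ord_of_pairK. Qed.

Lemma mem_prod_faceP a F x :
  reflect (forall i, a i != None -> row x i \in face_set (F i))
          (x \in face_set (prod_face a F)).
Proof.
apply: (iffP (face_setP _ _)) => [x_a i ai | x_F k v].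
  apply/face_setP => j v Fij; rewrite ffunE; apply: x_a.
  by rewrite prod_faceE; case: (a i) ai.
have [[i j] ->] := ord_pairP k; rewrite prod_faceE.
case ai: (a i) => [w|] // Fij.
have /x_F/face_setP/(_ j v Fij) : a i != None by rewrite ai.
by rewrite ffunE.
Qed.

Lemma eq_prod_face a F F' :
  (forall i, a i != None -> F i = F' i) -> prod_face a F = prod_face a F'.
Proof.
move=> FF'; apply/ffunP => k; rewrite !ffunE; case: pair_of_ord => i j.
by case ai: (a i) => [v|] //; rewrite FF' ?ai.
Qed.

Lemma card_direction_prod_face a F :
  #|direction (prod_face a F)| =
    \sum_i (if a i is Some _ then #|direction (F i)| else n2).
Proof.
rewrite -sum1dep_card (reindex ord_of_pair) /=; last first.
  by exists pair_of_ord => ? _; [exact: ord_of_pairK | exact: pair_of_ordK].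
transitivity (\sum_i \sum_(j | prod_face a F (ord_of_pair (i, j)) == None) 1).
  by rewrite pair_big_dep; apply: eq_bigl => -[i j].
apply: eq_bigr => i _; under eq_bigl do rewrite prod_faceE.
case: (a i) => [v|]; first by rewrite sum1dep_card.
by rewrite sum1_card card_ord.
Qed.

Lemma free_row_prod_face a F i : direction (F i) != setT ->
  (a i == None) = [forall j, prod_face a F (ord_of_pair (i, j)) == None].
Proof.
move=> Fi_proper; under eq_forallb do rewrite prod_faceE.
case: (a i) => [v|] /=; last by apply/esym/forallP.
apply/esym/negP => /forallP Fi_free; case/eqP: Fi_proper.
by apply/setP => j; rewrite !inE Fi_free.
Qed.

Lemma parallel_prod_face a a' F F' :
  (forall i, direction (F i) != setT) -> (forall i, direction (F' i) != setT) ->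
  parallel (prod_face a F) (prod_face a' F') ->
  parallel a a' /\ (forall i, a i != None -> parallel (F i) (F' i)).
Proof.
move=> F_proper F'_proper /parallelP par.
have aa' i : (a i == None) = (a' i == None).
  rewrite (free_row_prod_face a (F_proper i)) (free_row_prod_face a' (F'_proper i)).
  by apply: eq_forallb => j; rewrite par.
split=> [|i ai]; first exact/parallelP.
have ai' : a' i != None by rewrite -aa'.
apply/parallelP => j; move: (par (ord_of_pair (i, j))); rewrite !prod_faceE.
by case: (a i) ai; case: (a' i) ai'.
Qed.

Lemma antipodal_prod_face a a' F F' : antipodal a a' ->
  (forall i, a i != None -> antipodal (F i) (F' i)) ->
  antipodal (prod_face a F) (prod_face a' F').
Proof.
move=> /antipodalP[/parallelP aa' a_flip] FF'.
apply/antipodalP; split=> [|k v]; [apply/parallelP => k|];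
  have [[i j] ->] := ord_pairP k; rewrite !prod_faceE.
  case ai: (a i) => [w|]; last by move: (aa' i); rewrite ai; case: (a' i).
  have /FF'/antipodalP[/parallelP FiF' _] : a i != None by rewrite ai.
  by rewrite (a_flip i w ai) FiF'.
case ai: (a i) => [w|] // Fij.
have /FF'/antipodalP[_ Fi_flip] : a i != None by rewrite ai.
by rewrite (a_flip i w ai) (Fi_flip j v Fij).
Qed.

End ProductFace.

Section ProductSplitting.
Variables (n1 n2 k1 k2 : nat) (S1 : {set face n1}) (S2 : {set face n2}).
Hypotheses (S1_split : antipodal_splitting n1 k1 S1)
           (S2_split : antipodal_splitting n2 k2 S2).
Implicit Types x y : vertex (n1 * n2).

Let S1_tiling := splitting_tiling S1_split.
Let S2_tiling := splitting_tiling S2_split.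

Definition row_face x i : face n2 := face_of S2 (row x i).
Definition row_bits x : vertex n1 := [ffun i => face_bit (row_face x i)].
Definition prod_tile x : face (n1 * n2) :=
  prod_face (face_of S1 (row_bits x)) (row_face x).

Lemma row_face_in x i : row_face x i \in S2.
Proof. exact: (face_ofP _ S2_tiling).1. Qed.

Lemma row_bits_fixed x i v :
  face_of S1 (row_bits x) i = Some v -> face_bit (row_face x i) = v.
Proof.
move=> ai; have /face_setP/(_ i v ai) := (face_ofP (row_bits x) S1_tiling).2.
by rewrite ffunE.
Qed.

Lemma mem_prod_tile x : x \in face_set (prod_tile x).
Proof. by apply/mem_prod_faceP => i _; exact: (face_ofP _ S2_tiling).2. Qed.

Lemma prod_tile_eq x y : y \in face_set (prod_tile x) -> prod_tile y = prod_tile x.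
Proof.
set a := face_of S1 (row_bits x) => /mem_prod_faceP y_rows.
have same_row i : a i != None -> row_face y i = row_face x i.
  by move=> ai; apply: face_of_eq S2_tiling (row_face_in x i) (y_rows i ai).
rewrite /prod_tile -/a; have -> : face_of S1 (row_bits y) = a.
  apply: face_of_eq S1_tiling (face_ofP _ S1_tiling).1 _.
  apply/face_setP => i v ai; rewrite ffunE same_row ?ai //.
  exact: row_bits_fixed.
exact: eq_prod_face.
Qed.

Lemma card_direction_prod_tile x :
  #|direction (prod_tile x)| = n1 * n2 - k1 * k2.
Proof.
case: S1_split => /andP[_ lt_k1n1] _ S1_mface _ _.
case: S2_split => /andP[_ lt_k2n2] _ S2_mface _ _.
set a := face_of S1 (row_bits x).
have /S1_mface/eqP dir_a : a \in S1 by exact: (face_ofP _ S1_tiling).1.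
rewrite card_direction_prod_face.
rewrite (eq_bigr (fun i => n2 - k2 + if a i == None then k2 else 0)); last first.
  move=> i _; case: (a i) => [v|] /=; last by rewrite subnK // ltnW.
  by rewrite addn0; apply/eqP/S2_mface/row_face_in.
rewrite big_split /= -big_mkcond sum_nat_const card_ord sum_nat_cond_const.
rewrite -/(direction a) dir_a; nia.
Qed.

Lemma prod_tile_antipodal x y : prod_tile x != prod_tile y ->
  parallel (prod_tile x) (prod_tile y) -> antipodal (prod_tile x) (prod_tile y).
Proof.
have row_proper z i : direction (row_face z i) != setT.
  exact: (splitting_proper S2_split (row_face_in z i)).
have [_ _ _ _ S1_anti] := S1_split; have [_ _ _ _ S2_anti] := S2_split.
rewrite /prod_tile; set a := face_of S1 (row_bits x); set b := face_of S1 (row_bits y).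
have aS : a \in S1 by exact: (face_ofP _ S1_tiling).1.
have bS : b \in S1 by exact: (face_ofP _ S1_tiling).1.
move=> neq_xy /(parallel_prod_face (row_proper x) (row_proper y))[ab rows_par].
have same_rows i : a i != None -> (row_face x i == row_face y i) =
    (face_bit (row_face x i) == face_bit (row_face y i)).
  move=> ai; apply: (splitting_parallel_bit S2_split); rewrite ?row_face_in //.
  exact: rows_par.
have [eq_ab | neq_ab] := eqVneq a b.
  case/eqP: neq_xy; rewrite -eq_ab; apply: eq_prod_face => i ai; apply/eqP.
  case ai': (a i) ai => [v|] // _.
  have bi : b i = Some v by rewrite -eq_ab.
  by rewrite same_rows ?ai' // (row_bits_fixed ai') (row_bits_fixed bi).
have anti_ab := S1_anti a b aS bS neq_ab ab; have /antipodalP[_ a_flip] := anti_ab.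
apply: antipodal_prod_face anti_ab _ => i ai.
apply: S2_anti (row_face_in x i) (row_face_in y i) _ (rows_par i ai).
case ai': (a i) ai => [v|] // _.
rewrite same_rows ?ai' // (row_bits_fixed ai') (row_bits_fixed (a_flip i v ai')).
by case: v {ai'}.
Qed.

Definition prod_splitting := [set prod_tile x | x : vertex (n1 * n2)].

Lemma prod_splitting_tiling : tiling prod_splitting.
Proof.
move=> x; apply/eqP/cards1P; exists (prod_tile x); apply/setP => a.
apply/setIdP/set1P => [[/imsetP[y _ ->] x_y] | ->].
  by rewrite (prod_tile_eq x_y).
by split; [apply: imset_f | apply: mem_prod_tile].
Qed.

Lemma antipodal_splitting_prod :
  antipodal_splitting (n1 * n2) (k1 * k2) prod_splitting.
Proof.
case: S1_split => /andP[k1_gt0 lt_k1n1] _ _ _ _.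
case: S2_split => /andP[k2_gt0 lt_k2n2] _ _ _ _.
have tiles_mface : {in prod_splitting, forall a, is_mface (n1 * n2 - k1 * k2) a}.
  by move=> _ /imsetP[x _ ->]; rewrite /is_mface card_direction_prod_tile.
split.
- by rewrite muln_gt0 k1_gt0 k2_gt0 ltn_mul.
- by apply: card_tiling prod_splitting_tiling; rewrite // leq_mul // ltnW.
- exact: tiles_mface.
- exact: tiling_bigcup prod_splitting_tiling.
- by move=> _ _ /imsetP[x _ ->] /imsetP[y _ ->]; apply: prod_tile_antipodal.
Qed.

End ProductSplitting.

Definition splittable n k := exists S : {set face n}, antipodal_splitting n k S.

Lemma splittable_mul n1 n2 k1 k2 :
  splittable n1 k1 -> splittable n2 k2 -> splittable (n1 * n2) (k1 * k2).
Proof.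
move=> [S1 S1_split] [S2 S2_split].
by eexists; apply: (antipodal_splitting_prod S1_split S2_split).
Qed.

Lemma splittable_exp n k m : 0 < m -> splittable n k -> splittable (n ^ m) (k ^ m).
Proof.
move=> + nk; elim: m => [//|[_|m IHm] _]; first by rewrite !expn1.
by rewrite (expnS n) (expnS k); apply: splittable_mul nk (IHm _).
Qed.

Lemma all_iota_ord n (P : pred nat) : all P (iota 0 n) = [forall i : 'I_n, P i].
Proof.
apply/allP/forallP => P_n i; first by apply: P_n; rewrite mem_iota add0n ltn_ord.
by rewrite mem_iota add0n => lt_in; exact: (P_n (Ordinal lt_in)).
Qed.

Lemma has_iota_ord n (P : pred nat) : has P (iota 0 n) = [exists i : 'I_n, P i].
Proof. by apply: negb_inj; rewrite -all_predC all_iota_ord negb_exists. Qed.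

Lemma count_iota_ord n (P : pred nat) : count P (iota 0 n) = #|[set i : 'I_n | P i]|.
Proof. by rewrite -sum1_count -{1}(subn0 n) big_mkord sum1dep_card. Qed.

Lemma face_set_witness n (a : face n) : exists x, x \in face_set a.
Proof.
exists [ffun i => a i == Some true]; apply/face_setP => i v ai.
by rewrite ffunE ai; case: v {ai}.
Qed.

HB.instance Definition _ := hasDecEq.Build string String.eqb_spec.

Definition letter (w : string) (i : nat) : option bool :=
  match String.get i w with
  | Some "0"%char => Some false
  | Some "1"%char => Some true
  | _ => None
  end.

Definition face_of_word n (w : string) : face n := [ffun i : 'I_n => letter w i].

Section Words.
Variable n : nat.
Implicit Types w : string.

Definition word_stars w := count (fun i => letter w i == None) (iota 0 n).

Definition words_parallel w w' :=
  all (fun i => (letter w i == None) == (letter w' i == None)) (iota 0 n).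

Definition words_antipodal w w' := words_parallel w w' &&
  all (fun i => if letter w i is Some v then letter w' i == Some (~~ v) else true)
      (iota 0 n).

Definition words_disjoint w w' :=
  has (fun i => if letter w i is Some v then letter w' i == Some (~~ v) else false)
      (iota 0 n).

Lemma card_direction_word w : #|direction (face_of_word n w)| = word_stars w.
Proof.
by rewrite /word_stars count_iota_ord; apply: eq_card => i; rewrite !inE ffunE.
Qed.

Lemma parallel_words w w' :
  parallel (face_of_word n w) (face_of_word n w') = words_parallel w w'.
Proof.
rewrite /words_parallel all_iota_ord; apply/parallelP/forallP => ww' i.
  by rewrite -!(ffunE (fun i : 'I_n => letter _ i)) ww'.
by move/eqP: (ww' i); rewrite !ffunE.
Qed.

Lemma antipodal_words w w' :
  antipodal (face_of_word n w) (face_of_word n w') = words_antipodal w w'.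
Proof.
rewrite /antipodal /words_antipodal parallel_words all_iota_ord; congr (_ && _).
by apply: eq_forallb => i; rewrite !ffunE.
Qed.

Lemma words_disjointP w w' x : words_disjoint w w' ->
  x \in face_set (face_of_word n w) -> x \notin face_set (face_of_word n w').
Proof.
rewrite /words_disjoint has_iota_ord => /existsP[i].
case wi: (letter w i) => [v|] // /eqP w'i /face_setP x_w; apply/face_setP => x_w'.
have := x_w' i (~~ v); rewrite ffunE (x_w i v) ?ffunE // => /(_ w'i).
by case: v {wi w'i x_w'}.
Qed.

End Words.

Definition splitting_certificate n k (ws : seq string) : bool :=
  [&& 0 < k < n, uniq ws, size ws == 2 ^ k,
      all (fun w => word_stars n w == n - k) ws &
      all (fun w => all (fun w' => (w == w') || words_disjoint n w w' &&
        (words_parallel n w w' ==> words_antipodal n w w')) ws) ws].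

Lemma certificate_splitting n k ws : splitting_certificate n k ws ->
  antipodal_splitting n k [set a in map (face_of_word n) ws].
Proof.
case/and5P=> /andP[k_gt0 lt_kn] ws_uniq /eqP ws_size /allP ws_stars /allP ws_pairs.
set S := [set a in _].
have ww'_ok w w' : w \in ws -> w' \in ws -> w != w' -> words_disjoint n w w' &&
    (words_parallel n w w' ==> words_antipodal n w w').
  by move=> w_in w'_in; move/allP/(_ w' w'_in): (ws_pairs w w_in) => /orP[/eqP-> /eqP|].
have ww'_disj w w' x : w \in ws -> w' \in ws -> w != w' ->
    x \in face_set (face_of_word n w) -> x \notin face_set (face_of_word n w').
  move=> w_in w'_in /(ww'_ok w w' w_in w'_in)/andP[disj _].
  exact: (words_disjointP disj).
have S_disj : {in S &, forall a b x, x \in face_set a -> x \in face_set b -> a = b}.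
  move=> _ _ /[!inE] /mapP[w w_in ->] /mapP[w' w'_in ->] x x_w.
  have [-> // | neq_ww'] := eqVneq w w'.
  by rewrite (negbTE (ww'_disj w w' x w_in w'_in neq_ww' x_w)).
have S_mface : {in S, forall a, is_mface (n - k) a}.
  by move=> _ /[!inE] /mapP[w w_in ->]; rewrite /is_mface card_direction_word ws_stars.
have S_card : #|S| = 2 ^ k.
  rewrite cardsE -ws_size -(size_map (face_of_word n)); apply/card_uniqP.
  rewrite (map_inj_in_uniq _) // => w w' w_in w'_in eq_ww'.
  have [x x_w] := face_set_witness (face_of_word n w).
  apply/eqP; apply: contraT => /(ww'_disj w w' x w_in w'_in)/(_ x_w).
  by rewrite -eq_ww' x_w.
have S_tiling : tiling S.
  apply: (disjoint_tiling S_disj).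
  by rewrite (sum_multiplicity_mface S_mface) S_card -expnD subnKC // ltnW.
split=> //; [by rewrite k_gt0 | exact: (tiling_bigcup S_tiling) |].
move=> _ _ /[!inE] /mapP[w w_in ->] /mapP[w' w'_in ->] neq_a.
have neq_ww' : w != w' by apply: contraNneq neq_a => ->.
rewrite parallel_words antipodal_words.
by case/andP: (ww'_ok w w' w_in w'_in neq_ww') => _ /implyP.
Qed.

Local Open Scope string_scope.

Definition words_4_3 : seq string :=
  [:: "00*0"; "1*00"; "010*"; "101*"; "*110"; "*001"; "11*1"; "0*11"].

Definition words_8_5 : seq string := [::
  "*0*000*0"; "*1*111*1"; "*10000**"; "*01111**"; "*11**000"; "*00**111";
  "01*1*1*0"; "10*0*0*1"; "111**1*0"; "000**0*1"; "*00*110*"; "*11*001*";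
  "110*1**0"; "001*0**1"; "**1*1010"; "**0*0101"; "*0**1000"; "*1**0111";
  "*00*1*10"; "*11*0*01"; "0101*0**"; "1010*1**"; "10110***"; "01001***";
  "00*10**0"; "11*01**1"; "1*0100**"; "0*1011**"; "0**001*0"; "1**110*1";
  "1*0*01*0"; "0*1*10*1"].

Lemma splittable_4_3 : splittable 4 3.
Proof. by eexists; apply: (@certificate_splitting 4 3 words_4_3); vm_compute. Qed.

Lemma splittable_8_5 : splittable 8 5.
Proof. by eexists; apply: (@certificate_splitting 8 5 words_8_5); vm_compute. Qed.

Theorem corollary1 (t p : nat) : 0 < t -> 0 < p ->
  exists S : {set face (2 ^ (2 * t + 3 * p))},
    antipodal_splitting (2 ^ (2 * t + 3 * p)) (3 ^ t * 5 ^ p) S.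
Proof.
move=> t_gt0 p_gt0; rewrite expnD !expnM.
exact: (splittable_mul (splittable_exp t_gt0 splittable_4_3)
                       (splittable_exp p_gt0 splittable_8_5)).
Qed.
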